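(* Let $m\ge2$. For $j\ge0$ write $J_0=[j]_{t^m}$, $J_1=[j+1]_{t^m}$, $J_2=[j+2]_{t^m}$, and write $\beta=\beta(m;t,q)$. Define, for all $j\ge0$ (with the special values at index $0$ taking precedence over the general formulas): $A_0=-q^{m-2}$; $A_{2j}=(-t)^mq^{m-2}J_0/J_1$ ($j\ge1$); $A_{2j+1}=\frac{(-1)^mJ_2}{J_1}\beta+\left(\frac{1-2J_2}{J_1}-\frac{t^{m(j+1)}J_2}{J_1^2}\right)q^m$; $B_{2j}=\beta+2\left(\frac1{J_1}-1\right)(-q)^m$; $B_{2j+1}=\beta-2\left(\frac{t^{m(j+1)}}{J_1}+1\right)(-q)^m$; $C_0=-t^mq^{m+2}$; $C_{2j}=-\beta q^2-\left(\frac1{J_1}-\frac{t^{mj}}{J_0}-2\right)(-q)^{m+2}$ ($j\ge1$); $C_{2j+1}=-q^m$; $k_{2j}=m-2$, $k_{2j+1}=0$; $a_0=-1$, $a_{2j}=(-t)^mJ_0/J_1$ ($j\ge1$), $a_{2j+1}=(-1)^mJ_2/J_1$; $D_{2j}=\beta-(-q)^m(1+t^m)$, $D_{2j+1}=1$. Then for every $n\ge0$, $\mathtt{NextABC}(A_n,B_n,C_n)=(A_{n+1},B_{n+1},C_{n+1};k_n,a_n,D_n)$.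
   Context: For $0\le d\le m-1$ let $\rho(m;t,d)=\frac{m}{m-d}\sum_{i=0}^{d}\binom{m-1-d+i}{i}\binom{m-1-i}{d-i}t^i$ and $\rho(m;t,m)=1+t^m$; set $\beta(m;t,q)=\sum_{d=0}^{m}\rho(m;t,d)(-q)^d$. $[n]_x=1+x+\cdots+x^{n-1}$. All objects are polynomials in $q$ with coefficients in $\mathbb{Q}(t)$. The map $\mathtt{NextABC}$ takes polynomials $A,B,C$ in $q$ with $A\ne0$, $C\ne0$, $B(0)=1$, $C(0)=0$ and returns $(A^*,B^*,C^*;k,a,D)$ defined as follows: $k\ge0$ and $a\ne0$ are such that $A=aq^k+O(q^{k+1})$; $D$ is the unique polynomial in $q$ of degree at most $k+1$ with $\frac{aq^kB}{A}-\frac{aq^kC}{B}=D+O(q^{k+2})$ (as power series in $q$); and $A^*=\bigl(-D^2A/a+BDq^k-Caq^{2k}\bigr)/q^{2k+2}$, $B^*=2AD/(aq^k)-B$, $C^*=-Aq^2/a$. *)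

From HB Require Import structures.
From mathcomp Require Import all_boot all_order all_algebra.
Set Implicit Arguments. Unset Strict Implicit. Unset Printing Implicit Defensive.
Import Order.TTheory GRing.Theory Num.Theory.
Local Open Scope ring_scope.

Definition Qt : fieldType := {fraction {poly rat}}.
Definition tt : Qt := tofrac ('X : {poly rat}).

Definition qint (n : nat) (x : Qt) : Qt := \sum_(i < n) x ^+ i.

Definition rho (m d : nat) : Qt :=
  if d == m then 1 + tt ^+ m
  else (m%:R / (m - d)%:R) *
       \sum_(i < d.+1) ('C(m - 1 - d + i, i) * 'C(m - 1 - i, d - i))%:R * tt ^+ i.

(* beta(m;t,q) as a polynomial in q *)
Definition beta (m : nat) : {poly Qt} :=
  \sum_(d < m.+1) (rho m d)%:P * (- 'X) ^+ d.

(* "f/g = h + O(q^n)" as Laurent series in q (f, g, h polynomials, g <> 0):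
   writing g = q^v g' with g'(0) <> 0, this means q^(n+v) divides f - h g. *)
Definition ser_approx (F : fieldType) (f g h : {poly F}) (n : nat) : Prop :=
  g != 0 /\ exists v : nat,
    (forall i, (i < v)%N -> g`_i = 0) /\ g`_v != 0 /\ 'X ^+ (n + v) %| f - h * g.

Definition NextABC (F : fieldType) (A B C As Bs Cs : {poly F}) (k : nat) (a : F)
  (D : {poly F}) : Prop :=
  [/\ A != 0, C != 0, B`_0 = 1 & C`_0 = 0] /\
  [/\ a != 0, (forall i, (i < k)%N -> A`_i = 0) & A`_k = a] /\
  (* D of degree <= k+1 with a q^k B/A - a q^k C/B = D + O(q^(k+2)) *)
  (size D <= k.+2)%N /\
  ser_approx (a%:P * 'X ^+ k * B * B - a%:P * 'X ^+ k * C * A) (A * B) D k.+2 /\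
  As * 'X ^+ (2 * k + 2) =
    - (a^-1)%:P * D ^+ 2 * A + B * D * 'X ^+ k - C * a%:P * 'X ^+ (2 * k) /\
  (Bs + B) * (a%:P * 'X ^+ k) = 2%:R * A * D /\
  Cs = - (A * 'X ^+ 2) * (a^-1)%:P.

Section Seqs.
Variable m : nat.
Let tm : Qt := tt ^+ m.
Let J0 (j : nat) : Qt := qint j tm.
Let J1 (j : nat) : Qt := qint j.+1 tm.
Let J2 (j : nat) : Qt := qint j.+2 tm.
Let mq (e : nat) : {poly Qt} := (- 'X) ^+ e.

Definition seqA (n : nat) : {poly Qt} :=
  let j := n./2 in
  if odd n then
    ((-1) ^+ m * J2 j / J1 j)%:P * beta m
    + ((1 - 2%:R * J2 j) / J1 j - tt ^+ (m * j.+1) * J2 j / (J1 j ^+ 2))%:P * 'X ^+ m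
  else if j == 0%N then - 'X ^+ (m - 2)
  else ((- tt) ^+ m * J0 j / J1 j)%:P * 'X ^+ (m - 2).

Definition seqB (n : nat) : {poly Qt} :=
  let j := n./2 in
  if odd n then beta m - (2%:R * (tt ^+ (m * j.+1) / J1 j + 1))%:P * mq m
  else beta m + (2%:R * ((J1 j)^-1 - 1))%:P * mq m.

Definition seqC (n : nat) : {poly Qt} :=
  let j := n./2 in
  if odd n then - 'X ^+ m
  else if j == 0%N then - tm%:P * 'X ^+ (m + 2)
  else - beta m * 'X ^+ 2
       - ((J1 j)^-1 - tt ^+ (m * j) / J0 j - 2%:R)%:P * mq (m + 2).

Definition seqk (n : nat) : nat := if odd n then 0%N else (m - 2)%N.

Definition seqa (n : nat) : Qt :=
  let j := n./2 in
  if odd n then (-1) ^+ m * J2 j / J1 j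
  else if j == 0%N then -1
  else (- tt) ^+ m * J0 j / J1 j.

Definition seqD (n : nat) : {poly Qt} :=
  if odd n then 1 else beta m - mq m * (1 + tm)%:P.
End Seqs.

From Pilot Require Import Defs.
From HB Require Import structures.
From mathcomp Require Import all_boot all_order all_algebra.
From mathcomp Require Import ring.
Set Implicit Arguments. Unset Strict Implicit. Unset Printing Implicit Defensive.
Import Order.TTheory GRing.Theory Num.Theory.
Local Open Scope ring_scope.

(* All the data lie in a small space: B_n and D_{2j} are beta + u q^m, A_{2j} = a q^(m-2),
   A_{2j+1} = a (beta + c q^m), C_{2j+1} = -q^m and C_{2j} = (r beta + e q^m) q^2.  On data
   of these two shapes one step of NextABC can be computed once and for all, with k = 0,
   D = 1 at odd steps (A(0) = a) and k = m - 2, D = beta truncated below q^m at even steps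
   (D agrees with B modulo q^m, which is what the O(q^(k+2)) condition asks for).  This
   reduces the theorem to rational identities between the coefficients, which follow from
   [j+1]_x = 1 + x [j]_x and x^j = [j+1]_x - [j]_x for x = t^m. *)

Lemma sign_cases (R : nzRingType) (n : nat) : (-1) ^+ n = 1 :> R \/ (-1) ^+ n = -1 :> R.
Proof. by rewrite -signr_odd; case: odd; [right | left]. Qed.

Lemma exprNX (F : fieldType) (n : nat) : (- 'X) ^+ n = ((-1) ^+ n)%:P * 'X^n :> {poly F}.
Proof. by rewrite [LHS]exprNn rmorph_sign. Qed.

Section NextABCSteps.
Variables (F : fieldType) (p : nat) (b : {poly F}).
Hypothesis b0 : b`_0 = 1.
Local Notation m := p.+2.

Lemma coef0_addCXn (c : F) : (b + c%:P * 'X^m)`_0 = 1.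
Proof. by rewrite coefD coefCM coefXn mulr0 addr0. Qed.

Lemma addCXn_neq0 (c : F) : b + c%:P * 'X^m != 0.
Proof. by apply: contra_neq (oner_neq0 F) => P0; rewrite -(coef0_addCXn c) P0 coef0. Qed.

Lemma NextABC_odd_step (a c u a' u' : F) :
  a != 0 -> a' = u - c + a -> u' = 2%:R * c - u ->
  NextABC (a%:P * (b + c%:P * 'X^m)) (b + u%:P * 'X^m) (- 'X^m)
          (a'%:P * 'X^p) (b + u'%:P * 'X^m) (((-1)%:P * b + (- c)%:P * 'X^m) * 'X^2)
          0 a 1.
Proof.
move=> a0 -> ->; set P := b + c%:P * 'X^m; set B := b + u%:P * 'X^m.
have aK : (a^-1)%:P * a%:P = 1 by rewrite -polyCM mulVf.
have A0 : (a%:P * P)`_0 = a by rewrite coefCM coef0_addCXn mulr1.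
split.
  split; rewrite ?coefN ?coefXn ?oppr0 ?coef0_addCXn //.
    by rewrite mulf_eq0 polyC_eq0 negb_or a0 addCXn_neq0.
  by rewrite oppr_eq0 expf_neq0 ?polyX_eq0.
split; first by split.
split; first by rewrite size_poly1.
split.
  split; first by rewrite !mulf_neq0 ?polyC_eq0 ?addCXn_neq0.
  exists 0%N; split=> //; split; first by rewrite coef0M A0 coef0_addCXn mulr1.
  apply/dvdpP; exists ('X^p * a%:P * ((u - c)%:P * B + a%:P * P)).
  by rewrite /P /B !exprS; ring.
split.
  have -> : - (a^-1)%:P * 1 ^+ 2 * (a%:P * P) = - P * ((a^-1)%:P * a%:P) by ring.
  by rewrite aK /P /B !exprS; ring.
split; first by rewrite /P /B; ring.
have -> : - (a%:P * P * 'X^2) * (a^-1)%:P = - P * 'X^2 * ((a^-1)%:P * a%:P) by ring.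
by rewrite aK /P; ring.
Qed.

Lemma lincomb_neq0 (r e : F) : r != 0 \/ e != 0 -> r%:P * b + e%:P * 'X^m != 0.
Proof.
case: (eqVneq r 0) => [-> [//|e0] | r0 _].
  by rewrite mul0r add0r mulf_neq0 ?polyC_eq0 ?expf_neq0 ?polyX_eq0.
have coef0_P : (r%:P * b + e%:P * 'X^m)`_0 = r.
  by rewrite coefD !coefCM coefXn b0 mulr1 mulr0 addr0.
by apply: contra_neq r0 => P0; rewrite -coef0_P P0 coef0.
Qed.

Lemma NextABC_even_step (a u d r e a' c' u' : F) :
  a != 0 -> r%:P * b + e%:P * 'X^m != 0 -> (size (b + d%:P * 'X^m)%R <= m)%N ->
  a' = u - d - a * r -> a' * c' = d * (u - d) - a * e -> u' = 2%:R * d - u ->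
  NextABC (a%:P * 'X^p) (b + u%:P * 'X^m) ((r%:P * b + e%:P * 'X^m) * 'X^2)
          (a'%:P * (b + c'%:P * 'X^m)) (b + u'%:P * 'X^m) (- 'X^m) p a (b + d%:P * 'X^m).
Proof.
move=> a0 C0 Dsize ea' ec' ->; set D := b + d%:P * 'X^m; set B := b + u%:P * 'X^m.
set C := r%:P * b + e%:P * 'X^m.
have -> : a'%:P * (b + c'%:P * 'X^m) = D * (u - d)%:P - a%:P * C.
  by rewrite mulrDr mulrA -polyCM ec' ea' /D /C; ring.
have aK : (a^-1)%:P * a%:P = 1 by rewrite -polyCM mulVf.
have X0 (n : nat) : 'X^n != 0 :> {poly F} by rewrite expf_neq0 ?polyX_eq0.
have A0 : a%:P * 'X^p != 0 by rewrite mulf_neq0 ?polyC_eq0.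
have coefA i : (a%:P * 'X^p)`_i = if i == p then a else 0.
  by rewrite coefCM coefXn; case: eqP; rewrite ?mulr1 ?mulr0.
split.
  by split; [exact: A0 | rewrite mulf_neq0 ?X0 | exact: coef0_addCXn | rewrite coefMXn].
split; first by split=> // [i /ltn_eqF ip|]; rewrite coefA ?ip ?eqxx.
split=> //.
split.
  split; first by rewrite mulf_neq0 ?addCXn_neq0.
  exists p; split=> [i ip|]; last split.
  - by rewrite -mulrA coefCM coefXnM ip mulr0.
  - by rewrite -mulrA coefCM coefXnM ltnn subnn coef0_addCXn !mulr1.
  apply/dvdpP; exists (a%:P * ((u - d)%:P * B - a%:P * C)).
  by rewrite /B /D !exprD !exprS; ring.
split.
  have -> : - (a^-1)%:P * D ^+ 2 * (a%:P * 'X^p) = - (D ^+ 2 * 'X^p) * ((a^-1)%:P * a%:P).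
    by ring.
  by rewrite aK /B /D mul2n -addnn !exprD !exprS; ring.
split; first by rewrite /B /D; ring.
have -> : - (a%:P * 'X^p * 'X^2) * (a^-1)%:P = - 'X^p * 'X^2 * ((a^-1)%:P * a%:P) by ring.
by rewrite aK mulr1 mulNr -exprD addn2.
Qed.

End NextABCSteps.

Definition qintF (F : fieldType) (n : nat) (x : F) : F := \sum_(i < n) x ^+ i.

Lemma qintFS (F : fieldType) (n : nat) (x : F) : qintF n.+1 x = 1 + x * qintF n x.
Proof.
rewrite /qintF big_ord_recl expr0 mulr_sumr; congr (_ + _).
by apply: eq_bigr => i _; rewrite exprS.
Qed.

Lemma qintF1 (F : fieldType) (x : F) : qintF 1 x = 1.
Proof. by rewrite /qintF big_ord1 expr0. Qed.

Lemma expr_qintF (F : fieldType) (n : nat) (x : F) : x ^+ n = qintF n.+1 x - qintF n x.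
Proof. by rewrite /qintF big_ord_recr addrC addKr. Qed.

(* The sequences of Defs over an arbitrary field, with tt and beta m as parameters t and b.
   At F := Qt they are convertible to seqA, ..., seqD; working over an abstract field keeps
   the ring and field tactics from computing in Q(t). *)
Section GenericSequences.
Variables (F : fieldType) (t : F) (b : {poly F}) (m : nat).
Local Notation J k := (qintF k (t ^+ m)).

Definition seqAF (n : nat) : {poly F} :=
  let j := n./2 in
  if odd n then
    ((-1) ^+ m * J j.+2 / J j.+1)%:P * b
    + ((1 - 2%:R * J j.+2) / J j.+1 - t ^+ (m * j.+1) * J j.+2 / (J j.+1 ^+ 2))%:P * 'X ^+ m
  else if j == 0%N then - 'X ^+ (m - 2)
  else ((- t) ^+ m * J j / J j.+1)%:P * 'X ^+ (m - 2).

Definition seqBF (n : nat) : {poly F} :=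
  let j := n./2 in
  if odd n then b - (2%:R * (t ^+ (m * j.+1) / J j.+1 + 1))%:P * (- 'X) ^+ m
  else b + (2%:R * ((J j.+1)^-1 - 1))%:P * (- 'X) ^+ m.

Definition seqCF (n : nat) : {poly F} :=
  let j := n./2 in
  if odd n then - 'X ^+ m
  else if j == 0%N then - (t ^+ m)%:P * 'X ^+ (m + 2)
  else - b * 'X ^+ 2 - ((J j.+1)^-1 - t ^+ (m * j) / J j - 2%:R)%:P * (- 'X) ^+ (m + 2).

Definition seqaF (n : nat) : F :=
  let j := n./2 in
  if odd n then (-1) ^+ m * J j.+2 / J j.+1
  else if j == 0%N then -1
  else (- t) ^+ m * J j / J j.+1.

Definition seqDF (n : nat) : {poly F} :=
  if odd n then 1 else b - (- 'X) ^+ m * (1 + t ^+ m)%:P.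

End GenericSequences.

Section GenericRecursion.
Variables (F : fieldType) (t : F) (b : {poly F}) (p : nat).
Local Notation m := p.+2.
Local Notation x := (t ^+ m).
Local Notation s := ((-1) ^+ m : F).
Local Notation J k := (qintF k x).
Local Notation A := (seqAF t b m).
Local Notation B := (seqBF t b m).
Local Notation C := (seqCF t b m).
Local Notation a := (seqaF t m).
Local Notation D := (seqDF t b m).

Hypothesis J_neq0 : forall n, J n.+1 != 0.

Lemma exprM_qintF (n : nat) : t ^+ (m * n) = J n.+1 - J n.
Proof. by rewrite exprM expr_qintF. Qed.

Let c (j : nat) : F := s * ((J j.+2)^-1 - 1 - J j.+2 / J j.+1).

Lemma seqAF_even (j : nat) : A j.*2 = (a j.*2)%:P * 'X^p.
Proof.
rewrite /seqAF /seqaF /= odd_double !subSS subn0.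
by case: eqP => // _; rewrite polyCN polyC1 mulN1r.
Qed.

Lemma seqAF_odd (j : nat) : A j.*2.+1 = (a j.*2.+1)%:P * (b + (c j)%:P * 'X^m).
Proof.
have K0 := J_neq0 j; have L0 := J_neq0 j.+1.
rewrite /seqAF /seqaF /= odd_double uphalf_double exprM_qintF mulrDr mulrA -polyCM.
congr (_ + _%:P * _); rewrite /c (qintFS j.+1).
by case: (sign_cases F m) => ->; field; rewrite -?qintFS ?K0 ?L0.
Qed.

Lemma seqBF_odd (j : nat) : B j.*2.+1 = b + (- (2%:R * s * J j.+2 / J j.+1))%:P * 'X^m.
Proof.
have K0 := J_neq0 j; have L0 := J_neq0 j.+1.
rewrite /seqBF /= odd_double uphalf_double exprM_qintF exprNX mulrA -polyCM -mulNr -polyCN.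
by congr (_ + _%:P * _); rewrite (qintFS j.+1); field; rewrite -?qintFS ?K0 ?L0.
Qed.

Lemma seqBF_even (j : nat) : B j.*2 = b + (2%:R * s * ((J j.+1)^-1 - 1))%:P * 'X^m.
Proof. by rewrite /seqBF /= odd_double doubleK exprNX; ring. Qed.

Lemma seqCF_even (j : nat) : C j.+1.*2 = ((-1)%:P * b + (- c j)%:P * 'X^m) * 'X^2.
Proof.
have K0 := J_neq0 j; have L0 := J_neq0 j.+1.
rewrite /seqCF /= odd_double /= doubleK exprM_qintF exprNX.
transitivity (- b * 'X^2 - (c j)%:P * 'X^(m + 2)); last by rewrite exprD; ring.
congr (_ - _); rewrite mulrA -polyCM; congr (_%:P * _).
by rewrite exprD /c (qintFS j.+1); field; rewrite -?qintFS ?K0 ?L0.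
Qed.

Lemma seqCF0 : C 0 = (0%:P * b + (- x)%:P * 'X^m) * 'X^2.
Proof. by rewrite /seqCF /= exprD; ring. Qed.

Lemma seqDF_even (j : nat) : D j.*2 = b + (- (s * (1 + x)))%:P * 'X^m.
Proof. by rewrite /seqDF /= odd_double exprNX; ring. Qed.

Hypothesis t_neq0 : t != 0.
Hypothesis b0 : b`_0 = 1.
Hypothesis b_trunc : (size (b + (- (s * (1 + x)))%:P * 'X^m)%R <= m)%N.

Lemma NextABC_seqF_odd (j : nat) :
  NextABC (A j.*2.+1) (B j.*2.+1) (C j.*2.+1) (A j.+1.*2) (B j.+1.*2) (C j.+1.*2)
          (seqk m j.*2.+1) (a j.*2.+1) (D j.*2.+1).
Proof.
have K0 := J_neq0 j; have L0 := J_neq0 j.+1.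
rewrite seqAF_odd seqBF_odd seqAF_even seqBF_even seqCF_even /seqk /seqDF /seqCF /=.
rewrite odd_double /=; apply: NextABC_odd_step => //.
- rewrite /seqaF /= odd_double /= uphalf_double.
  by rewrite mulf_neq0 ?invr_eq0 // mulf_neq0 ?signr_eq0.
- rewrite /seqaF /c /= odd_double /= doubleK uphalf_double [(- t) ^+ _]exprNn (qintFS j.+1).
  by field; rewrite -?qintFS ?K0 ?L0.
- by rewrite /c (qintFS j.+1); field; rewrite -?qintFS ?K0 ?L0.
Qed.

Lemma NextABC_seqF_even (j : nat) :
  NextABC (A j.+1.*2) (B j.+1.*2) (C j.+1.*2) (A j.+1.*2.+1) (B j.+1.*2.+1) (C j.+1.*2.+1)
          (seqk m j.+1.*2) (a j.+1.*2) (D j.+1.*2).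
Proof.
have K0 := J_neq0 j; have L0 := J_neq0 j.+1; have M0 := J_neq0 j.+2.
rewrite seqAF_even seqBF_even seqCF_even seqDF_even seqAF_odd seqBF_odd /seqk /seqCF /=.
rewrite odd_double /= !subSS subn0; apply: NextABC_even_step => //.
- rewrite /seqaF /= odd_double /= doubleK.
  by rewrite mulf_neq0 ?invr_eq0 // mulf_neq0 // expf_neq0 ?oppr_eq0.
- by apply: lincomb_neq0 => //; left; rewrite oppr_eq0 oner_eq0.
- rewrite /seqaF /= odd_double /= doubleK uphalf_double [(- t) ^+ _]exprNn.
  by rewrite (qintFS j.+2) (qintFS j.+1); field; rewrite -?qintFS ?K0 ?L0 ?M0.
- rewrite /seqaF /c /= odd_double /= doubleK uphalf_double [(- t) ^+ _]exprNn.
  by rewrite (qintFS j.+2) (qintFS j.+1); field; rewrite -?qintFS ?K0 ?L0 ?M0.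
- by rewrite (qintFS j.+2) (qintFS j.+1); field; rewrite -?qintFS ?K0 ?L0 ?M0.
Qed.

Lemma NextABC_seqF_init :
  NextABC (A 0) (B 0) (C 0) (A 1) (B 1) (C 1) (seqk m 0) (a 0) (D 0).
Proof.
rewrite (seqAF_even 0) (seqBF_even 0) seqCF0 (seqDF_even 0) (seqAF_odd 0) (seqBF_odd 0).
rewrite /seqk /seqCF /seqaF /c /= !subSS subn0 (qintFS 1) !qintF1.
have L0 := J_neq0 1; rewrite qintFS qintF1 mulr1 in L0.
apply: NextABC_even_step => //.
- by rewrite oppr_eq0 oner_eq0.
- by apply: lincomb_neq0 => //; right; rewrite oppr_eq0 expf_neq0.
- by field; rewrite ?mulr1 ?oner_eq0 ?L0.
- by case: (sign_cases F m) => ->; field; rewrite ?mulr1 ?oner_eq0 ?L0.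
- by field; rewrite ?mulr1 ?oner_eq0 ?L0.
Qed.

Theorem NextABC_seqF (n : nat) :
  NextABC (A n) (B n) (C n) (A n.+1) (B n.+1) (C n.+1) (seqk m n) (a n) (D n).
Proof.
rewrite -[n]odd_double_half; case: (odd n) => /=; first exact: NextABC_seqF_odd.
by case: n./2 => [|j]; [exact: NextABC_seqF_init | exact: NextABC_seqF_even].
Qed.

End GenericRecursion.

Lemma qintF_tt_neq0 (m n : nat) : qintF n.+1 (tt ^+ m) != 0.
Proof.
have -> : qintF n.+1 (tt ^+ m) = tofrac (\sum_(i < n.+1) ('X^m : {poly rat}) ^+ i).
  by rewrite rmorph_sum; apply: eq_bigr => i _; rewrite !rmorphXn.
have ev1 : (\sum_(i < n.+1) ('X^m : {poly rat}) ^+ i).[1] = n.+1%:R.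
  rewrite horner_sum (eq_bigr (fun=> 1)) => [|i _]; last by rewrite horner_exp hornerXn !expr1n.
  by rewrite sumr_const card_ord.
by rewrite tofrac_eq0; apply: contra_eq_neq ev1 => ->; rewrite horner0 eq_sym pnatr_eq0.
Qed.

Lemma tt_neq0 : tt != 0.
Proof. by rewrite tofrac_eq0 polyX_eq0. Qed.

Lemma natr_Qt_neq0 (m : nat) : (0 < m)%N -> (m%:R : Qt) != 0.
Proof.
by move=> m0; rewrite -(rmorph_nat (@tofrac _)) tofrac_eq0 -polyC_natr polyC_eq0 pnatr_eq0 -lt0n.
Qed.

Lemma beta_poly (m : nat) : beta m = \poly_(d < m.+1) (rho m d * (-1) ^+ d).
Proof.
by rewrite poly_def; apply: eq_bigr => d _; rewrite exprNX mulrA -polyCM mul_polyC.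
Qed.

Lemma coef0_beta (m : nat) : (0 < m)%N -> (beta m)`_0 = 1.
Proof.
move=> m0; rewrite beta_poly coef_poly /= mulr1 /rho eq_sym gtn_eqF //.
by rewrite big_ord1 subn0 !bin0 mulr1 mulr1 mulfV // natr_Qt_neq0.
Qed.

Lemma size_beta_trunc (m : nat) :
  (size (beta m + (- ((-1) ^+ m * (1 + tt ^+ m)))%:P * 'X^m)%R <= m)%N.
Proof.
apply/leq_sizeP => j; rewrite leq_eqVlt => /predU1P [<- | mj];
  rewrite coefD coefCM coefXn beta_poly coef_poly.
  by rewrite eqxx ltnSn /rho eqxx mulr1 mulrC addrN.
by rewrite gtn_eqF // ltnNge mj mulr0 addr0.
Qed.

Theorem lemma7p1 (m : nat) (hm : (2 <= m)%N) (n : nat) :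
  NextABC (seqA m n) (seqB m n) (seqC m n)
          (seqA m n.+1) (seqB m n.+1) (seqC m n.+1)
          (seqk m n) (seqa m n) (seqD m n).
Proof.
case: m hm => [|[|p]] // _.
apply: (NextABC_seqF (t := tt) (b := beta p.+2)).
- exact: qintF_tt_neq0.
- exact: tt_neq0.
- exact: coef0_beta.
- exact: size_beta_trunc.
Qed.
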